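(* Let $G$ be a connected chordal graph which is not an atom (i.e. has at least one clique separator). If $G$ is a path graph, then for each clique separator $Q$ of $G$ the $Q$-attachedness graph of $G$ has no full antipodal triangle and contains no subgraph isomorphic (as a 2-edge-colored graph) to any graph in $\mathcal F_0$.
   Context: Graphs are finite and simple. A graph is a path graph if there are a tree $T$ and a bijection from its vertices to a collection of paths of $T$ such that two vertices are adjacent iff the vertex sets of the corresponding paths intersect. Chordal: no induced cycle of length $\ge4$. A clique is an inclusion-maximal set of pairwise adjacent vertices. A clique $Q$ of $G$ is a clique separator if $G-Q$ has at least two connected components; if their vertex sets are $V_1,\dots,V_s$, put $\gamma_i=G[V_i\cup Q]$ and $\Gamma_Q=\{\gamma_1,\dots,\gamma_s\}$. A relevant clique of $\gamma\in\Gamma_Q$ is a clique $K$ of the graph $\gamma$ with $K\cap Q\neq\emptyset$ and $K\neq Q$. An element $\gamma$ is a neighboring subgraph of a vertex $v$ if $v$ belongs to some relevant clique of $\gamma$; a set $W\subseteq\Gamma_Q$ is neighboring if there is $v\in Q$ such that every member of $W$ is a neighboring subgraph of $v$. Relations on $\Gamma_Q$: attachedness $\gamma\bowtie\gamma'$ iff there are relevant cliques $K$ of $\gamma$ and $K'$ of $\gamma'$ with $K\cap K'\cap Q\neq\emptyset$; dominance $\gamma\le\gamma'$ iff $\gamma\bowtie\gamma'$ and, for each relevant clique $K'$ of $\gamma'$, either $K\cap Q\subseteq K'\cap Q$ for every relevant clique $K$ of $\gamma$, or $K\cap K'\cap Q=\emptyset$ for every relevant clique $K$ of $\gamma$; antipodality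 $\gamma\leftrightarrow\gamma'$ iff there are relevant cliques $K$ of $\gamma$ and $K'$ of $\gamma'$ with $K\cap K'\cap Q\neq\emptyset$ and $K\cap Q$, $K'\cap Q$ inclusion-wise incomparable. By standing convention, elements $\gamma,\gamma'$ with $\gamma\le\gamma'$ and $\gamma'\le\gamma$ are identified, so $\le$ is a partial order. The $Q$-attachedness graph has vertex set $\Gamma_Q$ and an edge $\gamma\gamma'$ for each pair of distinct attached elements, colored antipodal if $\gamma\leftrightarrow\gamma'$ and dominance otherwise. A triangle is full if its vertex set is a neighboring set; a full antipodal triangle is a full triangle with all edges antipodal. 2-edge-colored graphs: $W^{(0)}_{2k+1}$ ($k\ge1$): hub $c$, rim $x_1,\dots,x_{2k+1}$, rim edges $x_ix_{i+1}$ (indices mod $2k+1$) antipodal, all spokes $cx_i$ dominance. $W^{(1)}_{2k+1}$ ($k\ge1$): same, except the spoke $cx_1$ is antipodal. $F_{2n+1}$ ($n\ge2$): vertices $c,x_1,\dots,x_{2n}$, edges $x_ix_{i+1}$ ($1\le i\le 2n-1$), $cx_1$, $cx_{2n}$ antipodal and $cx_i$ ($2\le i\le 2n-1$) dominance. $\mathcal F_0=\{W^{(0)}_{2k+1},W^{(1)}_{2k+1},F_{2n+1}: k\ge1,n\ge2\}$. A subgraph isomorphic to $F$ means an injective map of $V(F)$ into the vertex set sending each edge of $F$ to an edge of the same color. *)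

From mathcomp Require Import all_boot.
Set Implicit Arguments. Unset Strict Implicit. Unset Printing Implicit Defensive.

Section Graphs.
Variables (V : finType) (e : rel V).

Definition connected_graph : Prop := forall x y : V, connect e x y.

Definition induced_cycle (k : nat) (c : 'I_k -> V) : Prop :=
  injective c /\
  forall i j : 'I_k,
    e (c i) (c j) = ((val j == (val i).+1 %% k) || (val i == (val j).+1 %% k)).

Definition chordal : Prop :=
  forall (k : nat) (c : 'I_k -> V), 4 <= k -> ~ induced_cycle c.

Definition complete_in (W K : {set V}) : Prop :=
  K \subset W /\ forall x y, x \in K -> y \in K -> x != y -> e x y.

Definition maxclique_in (W K : {set V}) : Prop :=
  complete_in W K /\ forall K', complete_in W K' -> K \subset K' -> K' = K.

Definition maxclique (K : {set V}) : Prop := maxclique_in setT K.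

Definition avoidQ (Q : {set V}) : rel V :=
  [rel x y | [&& e x y, x \notin Q & y \notin Q]].

Definition compQ (Q : {set V}) (x : V) : {set V} :=
  [set y | (y \notin Q) && connect (avoidQ Q) x y].

(* Gamma_Q, each element gamma_i = G[V_i \cup Q] represented by V_i *)
Definition comps (Q : {set V}) : {set {set V}} :=
  [set C | [exists x, (x \notin Q) && (C == compQ Q x)]].

Definition clique_separator (Q : {set V}) : Prop :=
  maxclique Q /\ 1 < #|comps Q|.

Definition relevant (Q C K : {set V}) : Prop :=
  [/\ maxclique_in (C :|: Q) K, K :&: Q != set0 & K != Q].

Definition neighboring_sub (Q C : {set V}) (v : V) : Prop :=
  exists K, relevant Q C K /\ v \in K.

Definition attached (Q C C' : {set V}) : Prop :=
  exists K K', [/\ relevant Q C K, relevant Q C' K' & K :&: K' :&: Q != set0].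

Definition dominated (Q C C' : {set V}) : Prop :=
  attached Q C C' /\
  forall K', relevant Q C' K' ->
    (forall K, relevant Q C K -> K :&: Q \subset K' :&: Q) \/
    (forall K, relevant Q C K -> K :&: K' :&: Q = set0).

Definition antipodal (Q C C' : {set V}) : Prop :=
  exists K K', [/\ relevant Q C K, relevant Q C' K', K :&: K' :&: Q != set0,
                   ~~ (K :&: Q \subset K' :&: Q) & ~~ (K' :&: Q \subset K :&: Q)].

(* standing convention: mutually dominated elements are identified *)
Definition identified (Q C C' : {set V}) : Prop :=
  dominated Q C C' /\ dominated Q C' C.

Definition full_antipodal_triangle (Q : {set V}) : Prop :=
  exists C1 C2 C3 : {set V},
    [/\ C1 \in comps Q, C2 \in comps Q & C3 \in comps Q] /\
    [/\ ~ identified Q C1 C2, ~ identified Q C2 C3 & ~ identified Q C1 C3] /\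
    [/\ antipodal Q C1 C2, antipodal Q C2 C3 & antipodal Q C1 C3] /\
    [/\ attached Q C1 C2, attached Q C2 C3 & attached Q C1 C3] /\
    exists2 v, v \in Q &
      [/\ neighboring_sub Q C1 v, neighboring_sub Q C2 v & neighboring_sub Q C3 v].

(* 2-edge-coloured graphs: col a b = None (no edge), Some true (antipodal),
   Some false (dominance).  Subgraph isomorphic to it: *)
Definition contains_colored (W : finType) (col : W -> W -> option bool)
    (Q : {set V}) : Prop :=
  exists phi : W -> {set V},
    [/\ forall a, phi a \in comps Q,
        forall a b, a != b -> ~ identified Q (phi a) (phi b),
        forall a b, col a b = Some true ->
          attached Q (phi a) (phi b) /\ antipodal Q (phi a) (phi b)
      & forall a b, col a b = Some false ->
          attached Q (phi a) (phi b) /\ ~ antipodal Q (phi a) (phi b)].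

End Graphs.

Definition is_tree (U : finType) (f : rel U) : Prop :=
  symmetric f /\ irreflexive f /\ (forall x y, connect f x y) /\
  ~ (exists s : seq U, [/\ 3 <= size s, uniq s & cycle f s]).

Definition tree_path (U : finType) (f : rel U) (P : {set U}) : Prop :=
  exists s : seq U, [/\ s != [::], uniq s, sorted f s & P = [set x in s]].

Definition path_graph (V : finType) (e : rel V) : Prop :=
  exists (U : finType) (f : rel U) (P : V -> {set U}),
    [/\ is_tree f, injective P, forall v, tree_path f (P v)
      & forall x y, x != y -> e x y = (P x :&: P y != set0)].

(* the family F_0 ; vertex None is the hub c, Some i is x_(i+1) *)
Definition cyc_adj (n : nat) (i j : 'I_n) : bool :=
  (val j == (val i).+1 %% n) || (val i == (val j).+1 %% n).

Definition W0col (k : nat) (a b : option 'I_(k.*2.+1)) : option bool :=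
  match a, b with
  | Some i, Some j => if cyc_adj i j then Some true else None
  | None, Some _ | Some _, None => Some false
  | None, None => None
  end.

Definition W1col (k : nat) (a b : option 'I_(k.*2.+1)) : option bool :=
  match a, b with
  | Some i, Some j => if cyc_adj i j then Some true else None
  | None, Some j | Some j, None => Some (val j == 0)
  | None, None => None
  end.

Definition Fcol (n : nat) (a b : option 'I_(n.*2)) : option bool :=
  match a, b with
  | Some i, Some j =>
      if (val j == (val i).+1) || (val i == (val j).+1) then Some true else None
  | None, Some j | Some j, None => Some ((val j == 0) || (val j == (n.*2).-1))
  | None, None => None
  end.

From mathcomp Require Import all_boot zify.

(* Represent G by paths P v of a tree T.  By the Helly property the paths of the
   clique Q share a node t, and by maximality of Q no other path contains t.  So the
   union of the paths of a component C of G - Q is a subtree of T - t, and the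
   components fall into branches, the components of T - t.  Three facts drive the
   proof: a vertex q of Q meets at most two branches, since P q is a path through t,
   so among three components adjacent to q two share a branch; antipodal components
   lie in different branches; and if three pairwise attached components lie in pairwise
   different branches, each two of them are antipodal, because the relevant clique of
   C containing all neighbours of C in Q is the clique through the gate of C towards t.
   A full antipodal triangle contradicts the first two facts.  In the wheels and in the
   fan, parity along the odd rim gives a rim edge neither of whose ends shares the
   branch of the hub; both of its spokes are then antipodal, whereas the colouring makes
   one of them a dominance edge. *)

Set Implicit Arguments. Unset Strict Implicit. Unset Printing Implicit Defensive.

Lemma middle_of_three (x y z : nat) : x != y -> y != z -> x != z ->
  [|| (y < x < z) || (z < x < y), (x < y < z) || (z < y < x)
    | (x < z < y) || (y < z < x)].
Proof.
move=> /eqP ? /eqP ? /eqP ?.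
by case: (ltngtP x y) => ?; case: (ltngtP y z) => ?; case: (ltngtP x z) => ?;
  rewrite /= ?orbT //; lia.
Qed.

Lemma two_false_in_a_row (b : nat -> bool) m : odd m -> b 0 = b m ->
  (forall i, i < m -> ~~ (b i && b i.+1)) ->
  exists2 i, i < m & ~~ b i && ~~ b i.+1.
Proof.
move=> odd_m b0m noTT.
have [/hasP [i] | /hasPn noFF] := boolP (has (fun i => ~~ b i && ~~ b i.+1) (iota 0 m)).
  by rewrite mem_iota => /andP [_ im] FF; exists i.
have alt i : i <= m -> b i = b 0 (+) odd i.
  elim: i => [|i IH] im; first by rewrite addbF.
  have := noTT i im; have := noFF i; rewrite mem_iota im => /(_ isT).
  by rewrite IH ?(ltnW im) //=; case: (b 0); case: (odd i); case: (b i.+1).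
by move: b0m; rewrite (alt m) // odd_m; case: (b 0).
Qed.

Section Cliques.
Variables (V : finType) (e : rel V).
Hypothesis e_sym : symmetric e.

Definition completeb (W K : {set V}) : bool :=
  (K \subset W) && [forall x in K, forall y in K, (x != y) ==> e x y].

Lemma completeP W K : reflect (complete_in e W K) (completeb W K).
Proof.
apply: (iffP andP) => [[sKW /forall_inP cK] | [sKW cK]]; split => //.
  by move=> x y xK yK xy; move/forall_inP/(_ y yK)/implyP: (cK x xK); apply.
by apply/forall_inP => x xK; apply/forall_inP => y yK; apply/implyP; apply: cK.
Qed.

Lemma maxclique_in_extend W K0 : complete_in e W K0 ->
  exists K, maxclique_in e W K /\ K0 \subset K.
Proof.
move=> /completeP cK0.
pose ext K := completeb W K && (K0 \subset K).
have [|K /andP [cK sK0K] maxK] := @arg_maxnP _ K0 ext (fun K => #|K|).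
  by rewrite /ext cK0 subxx.
exists K; split => //; split => [|K' /completeP cK' sKK']; first exact/completeP.
apply/eqP; rewrite eq_sym eqEcard sKK' /=; apply: maxK.
by rewrite /ext cK' (subset_trans sK0K sKK').
Qed.

Lemma maxclique_in_adj_all W K v : maxclique_in e W K -> v \in W ->
  (forall c, c \in K -> c != v -> e v c) -> v \in K.
Proof.
move=> [[sKW cK] maxK] vW adj.
have cvK : complete_in e W (v |: K).
  split=> [|x y]; first by rewrite subUset sub1set vW.
  case/setU1P=> [-> | xK] /setU1P [-> | yK] xy.
  - by rewrite eqxx in xy.
  - by apply: adj; rewrite // eq_sym.
  - by rewrite e_sym; apply: adj.
  - exact: cK.
by rewrite -(maxK _ cvK (subsetUr _ _)) setU11.
Qed.

Lemma maxclique_in_nonadj W K v : maxclique_in e W K -> v \in W -> v \notin K ->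
  exists2 c, c \in K & ~~ e v c.
Proof.
move=> mK vW vK; apply/exists_inP; apply: contraNT vK => /exists_inPn adj.
by apply: maxclique_in_adj_all mK vW _ => c cK _; apply/negbNE/adj.
Qed.

Lemma maxclique_neq0 (x : V) Q : maxclique e Q -> Q != set0.
Proof.
case=> _ maxQ; apply/eqP => Q0.
have cx : complete_in e setT [set x].
  by split=> [|a b /set1P -> /set1P ->]; rewrite ?subsetT ?eqxx.
have /setP /(_ x) : [set x] = Q by apply: maxQ cx _; rewrite Q0 sub0set.
by rewrite Q0 set11 inE.
Qed.

End Cliques.

Section Tree.
Variables (U : finType) (f : rel U).
Hypotheses (f_sym : symmetric f) (f_irr : irreflexive f).
Hypothesis f_acyclic : ~ exists s : seq U, [/\ 3 <= size s, uniq s & cycle f s].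

Definition induced (X : {set U}) : rel U := [rel u w | [&& f u w, u \in X & w \in X]].

Definition subtree (X : {set U}) : Prop :=
  forall x y, x \in X -> y \in X -> connect (induced X) x y.

Definition remove_edge (a b : U) : rel U :=
  [rel x y | f x y && ~~ (((x == a) && (y == b)) || ((x == b) && (y == a)))].

Lemma induced_connect_sym (X : {set U}) : connect_sym (induced X).
Proof.
by apply: sym_connect_sym => x y; rewrite /induced /= f_sym [(x \in X) && _]andbC.
Qed.

Lemma remove_edge_connect_sym a b : connect_sym (remove_edge a b).
Proof.
apply: sym_connect_sym => x y.
by rewrite /remove_edge /= f_sym orbC ![(y == _) && _]andbC.
Qed.

Lemma connect_induced_sub (X Y : {set U}) : X \subset Y ->
  subrel (connect (induced X)) (connect (induced Y)).
Proof.
move=> sXY; apply: connect_sub => x y /and3P [fxy xX yX].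
by apply: connect1; rewrite /induced /= fxy !(subsetP sXY).
Qed.

Lemma connect_induced_remove_edge (X : {set U}) a b : (a \notin X) || (b \notin X) ->
  subrel (connect (induced X)) (connect (remove_edge a b)).
Proof.
move=> abX; apply: connect_sub => x y /and3P [fxy xX yX]; apply: connect1.
rewrite /remove_edge /= fxy; apply: contraL abX => /orP [] /andP [/eqP ax /eqP bx];
  by rewrite -ax -bx xX yX.
Qed.

Lemma edge_separates a b : f a b -> ~~ connect (remove_edge a b) a b.
Proof.
move=> fab; apply/negP => /connectP [p pp lp].
case: (shortenP pp) lp => p' pp' up' _ lp'.
apply: f_acyclic; exists (a :: p'); split => //.
  case: p' pp' up' lp' => [|x [|y p'']] //=.
  - by move=> _ _ eab; move: fab; rewrite -eab f_irr.
  - by rewrite andbT => /andP [_ /negP + _ eb]; rewrite eb !eqxx.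
rewrite /= rcons_path -lp' f_sym fab andbT.
by apply: sub_path pp' => x y /andP [].
Qed.

Lemma connect_nth (R : rel U) s x0 a c : a <= c ->
  (forall k, a <= k -> k < c -> R (nth x0 s k) (nth x0 s k.+1)) ->
  connect R (nth x0 s a) (nth x0 s c).
Proof.
elim: c => [|c IH] ac H; first by move: ac; rewrite leqn0 => /eqP ->.
case: (ltngtP a c.+1) ac => // [ac _ | -> _]; last exact: connect0.
apply: connect_trans (IH ac _) (connect1 (H _ _ _)) => // k ak kc.
exact/H/ltnW.
Qed.

Lemma sorted_nth_step s x0 k : sorted f s -> k.+1 < size s ->
  f (nth x0 s k) (nth x0 s k.+1).
Proof. by case: s => [|x p] //= /(pathP x0) H kp; apply: H. Qed.

Lemma sorted_nth_separates s x0 a b c : sorted f s -> uniq s ->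
  a < size s -> c < size s -> (a < b < c) || (c < b < a) ->
  ~~ connect (induced [set~ nth x0 s b]) (nth x0 s a) (nth x0 s c).
Proof.
move=> ss us.
wlog /andP [ab bc] : a c / a < b < c.
  move=> W ha hc /orP [] H; first by rewrite W ?H.
  by rewrite induced_connect_sym W ?H ?orbT.
move=> _ cs _; case: b ab bc => [//|b] ab bc.
have nthE i j : i < size s -> j < size s -> (nth x0 s i == nth x0 s j) = (i == j).
  by move=> *; apply: nth_uniq.
have along i j : i <= j -> j < size s -> (b < i) || (j <= b) ->
    connect (remove_edge (nth x0 s b) (nth x0 s b.+1)) (nth x0 s i) (nth x0 s j).
  move=> ij js side; apply: connect_nth => // k ik kj.
  rewrite /remove_edge /= sorted_nth_step //; last by lia.
  by rewrite !nthE; try lia; apply/negP => /orP [] /andP [/eqP ? /eqP ?]; lia.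
(* Otherwise s_b, s_a, s_c, s_b.+1 would join the ends of the edge s_b s_b.+1 without it. *)
apply/negP => H; have bs : b.+1 < size s by lia.
have /negP := edge_separates (sorted_nth_step x0 ss bs); apply.
apply: (@connect_trans _ _ (nth x0 s a)).
  by rewrite remove_edge_connect_sym along //; lia.
apply: (@connect_trans _ _ (nth x0 s c)).
  by apply: connect_induced_remove_edge H; rewrite !in_setC1 eqxx orbT.
by rewrite remove_edge_connect_sym along //; lia.
Qed.

Lemma connect_induced_avoid (X : {set U}) z : z \notin X ->
  subrel (connect (induced X)) (connect (induced [set~ z])).
Proof.
move=> zX; apply: connect_induced_sub; apply/subsetP => y yX.
by rewrite in_setC1; apply: contraNneq zX => <-.
Qed.

Lemma tree_path_subtree Y : tree_path f Y -> subtree Y.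
Proof.
case=> s [_ _ ss ->] x y; rewrite !inE => xs ys.
wlog le_xy : x y xs ys / index x s <= index y s.
  move=> W; case: (leqP (index x s) (index y s)) => [|/ltnW] le; first exact: W.
  by rewrite induced_connect_sym W.
rewrite -(nth_index x xs) -(nth_index x ys); apply: connect_nth => // k _ ky.
have ks : k.+1 < size s by apply: leq_ltn_trans ky _; rewrite index_mem.
by rewrite /induced /= sorted_nth_step // !inE !mem_nth // ltnW.
Qed.

Lemma sorted_index_separates s u v w : sorted f s -> uniq s ->
  u \in s -> v \in s -> w \in s ->
  (index u s < index v s < index w s) || (index w s < index v s < index u s) ->
  ~~ connect (induced [set~ v]) u w.
Proof.
move=> ss us us' vs ws H.
rewrite -(nth_index u us') -(nth_index u ws) -(nth_index u vs).
by apply: sorted_nth_separates; rewrite ?index_mem.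
Qed.

Lemma sorted_same_side_connect s u v t : sorted f s -> uniq s ->
  u \in s -> v \in s -> t \in s -> u != t -> v != t ->
  (index u s < index t s) = (index v s < index t s) ->
  connect (induced [set~ t]) u v.
Proof.
move=> ss us.
wlog le_uv : u v / index u s <= index v s.
  move=> W us' vs ts ut vt side; case: (leqP (index u s) (index v s)) => [|/ltnW] le.
    exact: W.
  by rewrite induced_connect_sym W.
move=> us' vs ts ut vt side.
have idx_neq x : x \in s -> x != t -> index x s != index t s.
  by move=> xs; apply: contra => /eqP /(index_inj t xs ts) ->.
have nu := idx_neq _ us' ut; have nv := idx_neq _ vs vt.
rewrite -(nth_index t us') -(nth_index t vs) -[in [set~ t]](nth_index t ts).
rewrite -!index_mem in us' vs ts.
apply: connect_nth => // k uk kv.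
have ks : k.+1 < size s := leq_ltn_trans kv vs.
rewrite /induced /= sorted_nth_step ?in_setC1 ?nth_uniq ?(ltnW ks) //=.
by move: side nu; case: (ltngtP (index u s)) => // hu /esym hv _; lia.
Qed.

Lemma tree_path_two_of_three Y t u1 u2 u3 : tree_path f Y -> t \in Y ->
  u1 \in Y -> u2 \in Y -> u3 \in Y -> u1 != t -> u2 != t -> u3 != t ->
  [|| connect (induced [set~ t]) u1 u2, connect (induced [set~ t]) u1 u3
    | connect (induced [set~ t]) u2 u3].
Proof.
case=> s [_ us ss ->]; rewrite !inE => ts u1s u2s u3s n1 n2 n3.
pose side u := index u s < index t s.
have same_side u v : u \in s -> v \in s -> u != t -> v != t -> side u == side v ->
    connect (induced [set~ t]) u v.
  by move=> us' vs ut vt /eqP; apply: sorted_same_side_connect.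
have /or3P [] : [|| side u1 == side u2, side u1 == side u3 | side u2 == side u3].
  by case: (side u1); case: (side u2); case: (side u3).
- by move=> h; rewrite (same_side u1 u2).
- by move=> h; rewrite (same_side u1 u3) ?orbT.
- by move=> h; rewrite (same_side u2 u3) ?orbT.
Qed.

Lemma tree_path_between Y t g g' : tree_path f Y -> t \in Y -> g \in Y -> g' \in Y ->
  t != g -> t != g' -> g != g' -> connect (induced [set~ t]) g g' ->
  (forall Z, subtree Z -> t \in Z -> g' \in Z -> g \in Z) \/
  (forall Z, subtree Z -> t \in Z -> g \in Z -> g' \in Z).
Proof.
case=> s [_ us ss ->]; rewrite !inE => ts gs g's tg tg' gg' tgg'.
have idx_neq x y : x \in s -> y \in s -> x != y -> index x s != index y s.
  by move=> xs ys; apply: contra => /eqP /(index_inj t xs ys) ->.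
have blocks x y z : x \in s -> y \in s -> z \in s ->
    (index y s < index x s < index z s) || (index z s < index x s < index y s) ->
    forall Z, subtree Z -> y \in Z -> z \in Z -> x \in Z.
  move=> xs ys zs mid Z subZ yZ zZ; apply/negPn/negP => xZ.
  move/negP: (sorted_index_separates ss us ys xs zs mid); apply.
  exact: connect_induced_avoid xZ _ _ (subZ _ _ yZ zZ).
have /or3P [mid|mid|mid] := middle_of_three (idx_neq _ _ ts gs tg)
  (idx_neq _ _ gs g's gg') (idx_neq _ _ ts g's tg').
- by move/negP: (sorted_index_separates ss us gs ts g's mid).
- by left; apply: blocks.
- by right; apply: blocks.
Qed.

Lemma path_first_entry (S : {set U}) t p : path f t p -> t \notin S -> last t p \in S ->
  exists u g, [/\ f u g, u \notin S, g \in S & connect (induced (~: S)) t u].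
Proof.
elim: p t => [|x p IH] t /=; first by move=> _ /negPf ->.
case/andP=> ftx px tS; case: (boolP (x \in S)) => xS lS; first by exists t, x.
have [u [g [fug uS gS xu]]] := IH x px xS lS.
exists u, g; split => //; apply: connect_trans xu; apply: connect1.
by rewrite /induced /= ftx !inE tS xS.
Qed.

Hypothesis f_connected : forall x y, connect f x y.

Lemma gate (S : {set U}) t s0 : subtree S -> t \notin S -> s0 \in S ->
  exists2 g, g \in S & forall X, subtree X -> t \in X ->
    forall x, x \in X -> x \in S -> g \in X.
Proof.
move=> subS tS s0S; have /connectP [p pp lp] := f_connected t s0.
have lS : last t p \in S by rewrite -lp.
have [u [g [fug uS gS tu]]] := path_first_entry pp tS lS.
(* If X missed g, the walk u ~ t ~ x ~ g through T - S, X and S would bypass the edge ug. *)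
exists g => // X subX tX x xX xS; apply/negPn/negP => gX.
move/negP: (edge_separates fug); apply.
apply: (@connect_trans _ _ t).
  rewrite remove_edge_connect_sym; apply: connect_induced_remove_edge tu.
  by rewrite !inE negbK gS orbT.
apply: (@connect_trans _ _ x).
  by apply: connect_induced_remove_edge (subX _ _ tX xX); rewrite gX orbT.
by apply: connect_induced_remove_edge (subS _ _ xS gS); rewrite uS.
Qed.

Lemma helly_subtrees (Xs : seq {set U}) : Xs != [::] ->
  (forall X, X \in Xs -> subtree X) -> {in Xs &, forall X Y, X :&: Y != set0} ->
  exists t, forall X, X \in Xs -> t \in X.
Proof.
elim: Xs => [|X Xs IH] // _ subXs meetXs.
have [x0 X0] : exists x0, x0 \in X.
  by have /set0Pn [x] := meetXs X X (mem_head _ _) (mem_head _ _); rewrite setIid; exists x.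
case: (eqVneq Xs [::]) => [-> | nXs].
  by exists x0 => Y; rewrite inE => /eqP ->.
have [t tXs] : exists t, forall Y, Y \in Xs -> t \in Y.
  apply: IH => // [Y YXs | Y Z YXs ZXs]; first by apply: subXs; rewrite inE YXs orbT.
  by apply: meetXs; rewrite inE ?YXs ?ZXs orbT.
case: (boolP (t \in X)) => tX.
  by exists t => Y; rewrite inE => /orP [/eqP -> | /tXs].
have [g gX gP] := gate (subXs _ (mem_head _ _)) tX X0.
exists g => Y; rewrite inE => /orP [/eqP -> // | YXs].
have YXXs : Y \in X :: Xs by rewrite inE YXs orbT.
have /set0Pn [y] := meetXs Y X YXXs (mem_head _ _).
by rewrite inE => /andP [yY yX]; apply: gP yY yX; [apply: subXs | apply: tXs].
Qed.

Section PathModel.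
Variables (V : finType) (e : rel V) (P : V -> {set U}).
Hypotheses (e_sym : symmetric e) (e_irr : irreflexive e).
Hypothesis P_path : forall v, tree_path f (P v).
Hypothesis P_adj : forall x y, x != y -> e x y = (P x :&: P y != set0).

Lemma model_nonempty v : exists u, u \in P v.
Proof. by case: (P_path v) => [[|x s] [//= _ _ _ ->]]; exists x; rewrite inE mem_head. Qed.

Lemma model_meet x y : e x y -> P x :&: P y != set0.
Proof. by move=> exy; rewrite -P_adj //; apply: contraTneq exy => ->; rewrite e_irr. Qed.

Lemma model_disjoint x y : x != y -> ~~ e x y -> P x :&: P y = set0.
Proof. by move=> xy; rewrite P_adj // negbK => /eqP. Qed.

Lemma clique_hub Q : maxclique e Q -> Q != set0 -> exists t, forall q, q \in Q -> t \in P q.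
Proof.
move=> [[_ cQ] _] /set0Pn [q0 q0Q].
have q0P : P q0 \in [seq P q | q <- enum Q] by rewrite map_f ?mem_enum.
have [|X /mapP [q _ ->] | X Y /mapP [q qQ ->] /mapP [q' q'Q ->] | t tP] :=
  @helly_subtrees [seq P q | q <- enum Q].
- by case: [seq P q | q <- enum Q] q0P.
- exact/tree_path_subtree/P_path.
- rewrite !mem_enum in qQ q'Q; case: (eqVneq q q') => [<- | qq'].
    by have [u uq] := model_nonempty q; apply/set0Pn; exists u; rewrite setIid.
  exact/model_meet/cQ.
- by exists t => q qQ; apply: tP; rewrite map_f ?mem_enum.
Qed.

Section Separator.
Variable Q : {set V}.
Hypothesis Q_max : maxclique e Q.
Variable t : U.
Hypothesis t_hub : forall q, q \in Q -> t \in P q.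

Lemma Q_complete x y : x \in Q -> y \in Q -> x != y -> e x y.
Proof. by case: Q_max => [[_ cQ] _]; apply: cQ. Qed.

Lemma hub_notin_model c : c \notin Q -> t \notin P c.
Proof.
apply: contra => tc; apply: (maxclique_in_adj_all e_sym Q_max (in_setT c)) => q qQ qc.
rewrite P_adj; last by rewrite eq_sym.
by apply/set0Pn; exists t; rewrite inE tc t_hub.
Qed.

Lemma hub_gate (A : {set U}) a : subtree A -> t \notin A -> a \in A ->
  exists2 g, g \in A & forall q, q \in Q -> P q :&: A != set0 -> g \in P q.
Proof.
move=> subA tA aA; have [g gA gP] := gate subA tA aA.
exists g => // q qQ /set0Pn [x]; rewrite inE => /andP [xq xA].
exact: gP (tree_path_subtree (P_path q)) (t_hub qQ) _ xq xA.
Qed.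

Definition tree_part (C : {set V}) : {set U} := \bigcup_(c in C) P c.

Lemma comps_rep C : C \in comps e Q -> exists2 x, x \notin Q & C = compQ e Q x.
Proof. by rewrite inE => /existsP [x /andP [xQ /eqP ->]]; exists x. Qed.

Lemma comps_notin_Q C c : C \in comps e Q -> c \in C -> c \notin Q.
Proof. by case/comps_rep => x _ ->; rewrite inE => /andP []. Qed.

Lemma hub_notin_tree_part C : C \in comps e Q -> t \notin tree_part C.
Proof.
by move=> CQ; apply/bigcupP => [[c cC]]; apply/negP/hub_notin_model/(comps_notin_Q CQ).
Qed.

Lemma tree_part_subtree C : C \in comps e Q -> subtree (tree_part C).
Proof.
case/comps_rep => x xQ defC.
have inP c u w : c \in C -> u \in P c -> w \in P c -> connect (induced (tree_part C)) u w.
  move=> cC uc wc; apply: (connect_induced_sub _ (tree_path_subtree (P_path c) uc wc)).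
  by apply/subsetP => v vc; apply/bigcupP; exists c.
have reach a p : a \in C -> path (avoidQ e Q) a p ->
    forall u w, u \in P a -> w \in P (last a p) -> connect (induced (tree_part C)) u w.
  elim: p a => [|b p IH] a aC /=; first by move=> _ u w; apply: inP.
  case/andP=> ab pb u w ua wl.
  have bC : b \in C.
    move: aC ab; rewrite defC !inE => /andP [_ xa] ab.
    by rewrite (connect_trans xa (connect1 ab)) andbT; case/and3P: ab.
  have [eab _ _] := and3P ab.
  have [z] := set0Pn _ (model_meet eab); rewrite inE => /andP [za zb].
  exact: connect_trans (inP _ _ _ aC ua za) (IH b bC pb z w zb wl).
have xC : x \in C by rewrite defC inE xQ connect0.
have [y0 y0x] := model_nonempty x.
have from_y0 w : w \in tree_part C -> connect (induced (tree_part C)) y0 w.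
  case/bigcupP => c cC wc; move: (cC); rewrite {1}defC inE => /andP [_ /connectP [p xp lp]].
  by apply: (reach x p xC xp y0 w y0x); rewrite -lp.
move=> u w /from_y0 y0u /from_y0 y0w.
by apply: connect_trans y0w; rewrite induced_connect_sym.
Qed.

Lemma tree_part_avoid_hub C u w : C \in comps e Q ->
  u \in tree_part C -> w \in tree_part C -> connect (induced [set~ t]) u w.
Proof.
move=> CQ uC wC.
exact: connect_induced_avoid (hub_notin_tree_part CQ) _ _ (tree_part_subtree CQ uC wC).
Qed.

Definition same_branch (C C' : {set V}) : bool :=
  [exists u in tree_part C, exists u' in tree_part C', connect (induced [set~ t]) u u'].

Lemma same_branchI C C' u u' : u \in tree_part C -> u' \in tree_part C' ->
  connect (induced [set~ t]) u u' -> same_branch C C'.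
Proof.
by move=> uC uC' uu'; apply/exists_inP; exists u => //; apply/exists_inP; exists u'.
Qed.

Lemma same_branchE C C' u u' : C \in comps e Q -> C' \in comps e Q -> same_branch C C' ->
  u \in tree_part C -> u' \in tree_part C' -> connect (induced [set~ t]) u u'.
Proof.
move=> CQ C'Q /exists_inP [v vC /exists_inP [v' v'C' vv']] uC uC'.
apply: connect_trans (tree_part_avoid_hub CQ uC vC) _.
exact: connect_trans vv' (tree_part_avoid_hub C'Q v'C' uC').
Qed.

Lemma same_branch_sym C C' : same_branch C C' = same_branch C' C.
Proof.
by apply/idP/idP => /exists_inP [u uC /exists_inP [u' uC' uu']];
  apply: same_branchI uC' uC _; rewrite induced_connect_sym.
Qed.

Lemma same_branch_trans C C' C'' : C' \in comps e Q ->
  same_branch C C' -> same_branch C' C'' -> same_branch C C''.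
Proof.
move=> C'Q /exists_inP [u uC /exists_inP [u' uC' uu']].
move=> /exists_inP [v vC' /exists_inP [v' vC'' vv']].
apply: same_branchI uC vC'' _; apply: connect_trans uu' _.
exact: connect_trans (tree_part_avoid_hub C'Q uC' vC') vv'.
Qed.

Definition adjacent_to (C : {set V}) q : Prop := exists2 c, c \in C & e q c.

Lemma adjacent_tree_part C q : adjacent_to C q -> exists2 u, u \in P q & u \in tree_part C.
Proof.
case=> c cC eqc; have /set0Pn [u] := model_meet eqc.
by rewrite inE => /andP [uq uc]; exists u => //; apply/bigcupP; exists c.
Qed.

Lemma relevant_outside_Q C K : relevant e Q C K ->
  exists c, [/\ c \in K, c \in C & c \notin Q].
Proof.
case=> mK _ KQ; have [[sK _] maxK] := mK.
have [sKQ | /subsetPn [c cK cQ]] := boolP (K \subset Q).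
  case/eqP: KQ; apply/esym/(maxK _ _ sKQ).
  by split=> [|x y]; [apply: subsetUr | apply: Q_complete].
by exists c; split => //; move: (subsetP sK c cK); rewrite inE (negbTE cQ) orbF.
Qed.

Lemma relevant_adjacent C K v : relevant e Q C K -> v \in K -> v \in Q -> adjacent_to C v.
Proof.
move=> rK vK vQ; have [c [cK cC cQ]] := relevant_outside_Q rK.
exists c => //; case: rK => [[[_ cKK] _] _ _]; apply: cKK => //.
by apply: contraNneq cQ => <-.
Qed.

Lemma attached_common_adjacent C C' : attached e Q C C' ->
  exists q, [/\ q \in Q, adjacent_to C q & adjacent_to C' q].
Proof.
case=> K [K' [rK rK' /set0Pn [q]]]; rewrite !inE => /andP [/andP [qK qK'] qQ].
exists q; split => //.
- exact: relevant_adjacent rK qK qQ.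
- exact: relevant_adjacent rK' qK' qQ.
Qed.

Lemma attached_sym C C' : attached e Q C C' -> attached e Q C' C.
Proof. by case=> K [K' [rK rK' KK']]; exists K', K; rewrite [K' :&: K]setIC. Qed.

Lemma adjacent_to_three C1 C2 C3 q :
  C1 \in comps e Q -> C2 \in comps e Q -> C3 \in comps e Q -> q \in Q ->
  adjacent_to C1 q -> adjacent_to C2 q -> adjacent_to C3 q ->
  [|| same_branch C1 C2, same_branch C1 C3 | same_branch C2 C3].
Proof.
move=> C1Q C2Q C3Q qQ /adjacent_tree_part [u1 u1q u1C] /adjacent_tree_part [u2 u2q u2C]
  /adjacent_tree_part [u3 u3q u3C].
have not_hub C u : C \in comps e Q -> u \in tree_part C -> u != t.
  by move=> CQ uC; apply: contraNneq (hub_notin_tree_part CQ) => <-.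
have := tree_path_two_of_three (P_path q) (t_hub qQ) u1q u2q u3q
  (not_hub _ _ C1Q u1C) (not_hub _ _ C2Q u2C) (not_hub _ _ C3Q u3C).
by case/or3P => [/(same_branchI u1C u2C) | /(same_branchI u1C u3C) | /(same_branchI u2C u3C)]
  ->; rewrite ?orbT.
Qed.

Lemma relevant_complete C K x y : relevant e Q C K -> x \in K -> y \in K ->
  x \in Q -> y \notin Q -> e x y.
Proof.
by case=> [[[_ cK] _] _ _] xK yK xQ yQ; apply: cK => //; apply: contraNneq yQ => <-.
Qed.

Lemma relevant_nonadj C K q : relevant e Q C K -> q \in Q -> q \notin K ->
  exists c, [/\ c \in K, c \in C & ~~ e q c].
Proof.
move=> rK qQ qK; have [mK _ _] := rK.
have qCQ : q \in C :|: Q by rewrite inE qQ orbT.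
have [c cK nqc] := maxclique_in_nonadj e_sym mK qCQ qK.
have cQ : c \notin Q.
  by apply: contra nqc => cQ; apply: Q_complete => //; apply: contraNneq qK => ->.
have [[sK _] _] := mK; exists c; split => //.
by move: (subsetP sK c cK); rewrite inE (negbTE cQ) orbF.
Qed.

Lemma model_gate d : d \notin Q ->
  exists2 g, g \in P d & forall q, q \in Q -> e q d -> g \in P q.
Proof.
move=> dQ; have [a ad] := model_nonempty d.
have [g gd gP] := hub_gate (tree_path_subtree (P_path d)) (hub_notin_model dQ) ad.
by exists g => // q qQ /model_meet; apply: gP.
Qed.

Lemma antipodal_not_same_branch C C' : C \in comps e Q -> C' \in comps e Q ->
  antipodal e Q C C' -> ~~ same_branch C C'.
Proof.
move=> CQ C'Q [K [K' [rK rK' /set0Pn [q qKK'] KK' K'K]]]; apply/negP => br.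
move: qKK'; rewrite !inE => /andP [/andP [qK qK'] qQ].
case/subsetPn: KK' => q1; rewrite !inE => /andP [q1K q1Q]; rewrite q1Q andbT => q1K'.
case/subsetPn: K'K => q2; rewrite !inE => /andP [q2K' q2Q]; rewrite q2Q andbT => q2K.
have [c [cK cC nq2c]] := relevant_nonadj rK q2Q q2K.
have [c' [c'K' c'C' nq1c']] := relevant_nonadj rK' q1Q q1K'.
have cQ := comps_notin_Q CQ cC; have c'Q := comps_notin_Q C'Q c'C'.
have [g gc gP] := model_gate cQ; have [g' gc' gP'] := model_gate c'Q.
have gq := gP _ qQ (relevant_complete rK qK cK qQ cQ).
have gq1 := gP _ q1Q (relevant_complete rK q1K cK q1Q cQ).
have g'q := gP' _ qQ (relevant_complete rK' qK' c'K' qQ c'Q).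
have g'q2 := gP' _ q2Q (relevant_complete rK' q2K' c'K' q2Q c'Q).
have outside x d y : x \in Q -> d \notin Q -> ~~ e x d -> y \in P d -> y \notin P x.
  move=> xQ dQ nxd yd; apply/negP => yx.
  have xd : x != d by apply: contraNneq dQ => <-.
  by have /setP /(_ y) := model_disjoint xd nxd; rewrite !inE yx yd.
have g'q1 := outside _ _ _ q1Q c'Q nq1c' gc'; have gq2 := outside _ _ _ q2Q cQ nq2c gc.
have tg : t != g by apply: contraNneq (hub_notin_model cQ) => ->.
have tg' : t != g' by apply: contraNneq (hub_notin_model c'Q) => ->.
have gg' : g != g' by apply: contraNneq g'q1 => <-.
have gT : g \in tree_part C by apply/bigcupP; exists c.
have g'T : g' \in tree_part C' by apply/bigcupP; exists c'.
have [sub|sub] := tree_path_between (P_path q) (t_hub qQ) gq g'q tg tg' gg'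
  (same_branchE CQ C'Q br gT g'T).
- by move/negP: gq2; apply; apply: sub (t_hub q2Q) g'q2; apply/tree_path_subtree/P_path.
- by move/negP: g'q1; apply; apply: sub (t_hub q1Q) gq1; apply/tree_path_subtree/P_path.
Qed.

Lemma relevant_clique_of_adjacent C q0 : C \in comps e Q -> q0 \in Q -> adjacent_to C q0 ->
  exists K, relevant e Q C K /\ forall q, q \in Q -> adjacent_to C q -> q \in K.
Proof.
move=> CQ q0Q q0C; have [x xQ defC] := comps_rep CQ.
have [y yx] := model_nonempty x.
have yT : y \in tree_part C by apply/bigcupP; exists x; rewrite // defC inE xQ connect0.
have [g gT gP] := hub_gate (tree_part_subtree CQ) (hub_notin_tree_part CQ) yT.
pose K0 := [set v in C :|: Q | g \in P v].
have cK0 : complete_in e (C :|: Q) K0.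
  split=> [|v w]; first by apply/subsetP => v; rewrite inE => /andP [].
  rewrite !inE => /andP [_ gv] /andP [_ gw] vw.
  by rewrite P_adj //; apply/set0Pn; exists g; rewrite inE gv gw.
have [K [mK sK0K]] := maxclique_in_extend cK0.
have adjK q : q \in Q -> adjacent_to C q -> q \in K.
  move=> qQ /adjacent_tree_part [u uq uT]; apply: (subsetP sK0K).
  by rewrite !inE qQ orbT (gP q qQ) //; apply/set0Pn; exists u; rewrite inE uq uT.
exists K; split => //; split => //.
  by apply/set0Pn; exists q0; rewrite inE adjK.
case/bigcupP: gT => c cC gc.
have cK : c \in K by apply: (subsetP sK0K); rewrite !inE cC gc.
by apply: contraTneq cK => ->; apply: comps_notin_Q CQ cC.
Qed.

Lemma spoke_antipodal H X Y : H \in comps e Q -> X \in comps e Q -> Y \in comps e Q ->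
  ~~ same_branch H X -> ~~ same_branch H Y -> ~~ same_branch X Y ->
  attached e Q H X -> attached e Q H Y -> attached e Q X Y -> antipodal e Q H X.
Proof.
move=> HQ XQ YQ nHX nHY nXY aHX aHY aXY.
have not3 r : r \in Q -> adjacent_to H r -> adjacent_to X r -> adjacent_to Y r -> False.
  move=> rQ rH rX rY; move: (adjacent_to_three HQ XQ YQ rQ rH rX rY).
  by rewrite (negbTE nHX) (negbTE nHY) (negbTE nXY).
have [q [qQ qH qX]] := attached_common_adjacent aHX.
have [q' [q'Q q'H q'Y]] := attached_common_adjacent aHY.
have [q'' [q''Q q''X q''Y]] := attached_common_adjacent aXY.
have [KH [rKH KH_all]] := relevant_clique_of_adjacent HQ qQ qH.
have [KX [rKX KX_all]] := relevant_clique_of_adjacent XQ qQ qX.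
exists KH, KX; split => //.
- by apply/set0Pn; exists q; rewrite !inE KH_all ?KX_all.
- apply/negP => /subsetP /(_ q'); rewrite !inE KH_all // q'Q => /(_ isT) /andP [q'KX _].
  exact: not3 q'Q q'H (relevant_adjacent rKX q'KX q'Q) q'Y.
- apply/negP => /subsetP /(_ q''); rewrite !inE KX_all // q''Q => /(_ isT) /andP [q''KH _].
  exact: not3 q''Q (relevant_adjacent rKH q''KH q''Q) q''X q''Y.
Qed.

Lemma no_full_antipodal_triangle : ~ full_antipodal_triangle e Q.
Proof.
case=> C1 [C2 [C3 [[C1Q C2Q C3Q] [_ [[a12 a23 a13] [_ [v vQ [n1 n2 n3]]]]]]]].
have adj C : neighboring_sub e Q C v -> adjacent_to C v.
  by case=> K [rK vK]; apply: relevant_adjacent rK vK vQ.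
by case/or3P: (adjacent_to_three C1Q C2Q C3Q vQ (adj _ n1) (adj _ n2) (adj _ n3));
  apply/negP/antipodal_not_same_branch.
Qed.

Lemma hub_odd_rim H (X : nat -> {set V}) m : odd m -> H \in comps e Q ->
  (forall i, i <= m -> X i \in comps e Q) -> (forall i, i <= m -> attached e Q H (X i)) ->
  (forall i, i < m -> attached e Q (X i) (X i.+1) /\ antipodal e Q (X i) (X i.+1)) ->
  same_branch H (X 0) = same_branch H (X m) ->
  exists2 i, i < m & antipodal e Q H (X i) /\ antipodal e Q H (X i.+1).
Proof.
move=> odd_m HQ XQ aHX rim b0m.
have nXX i : i < m -> ~~ same_branch (X i) (X i.+1).
  by move=> im; apply: antipodal_not_same_branch (XQ _ (ltnW im)) (XQ _ im) (rim i im).2.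
have [|i im /andP [nHi nHi1]] :=
    two_false_in_a_row (b := fun i => same_branch H (X i)) odd_m b0m.
  move=> i im; apply: contra (nXX i im) => /andP [Hi Hi1].
  by apply: same_branch_trans Hi1; rewrite // same_branch_sym.
have [XiQ Xi1Q] := (XQ _ (ltnW im), XQ _ im).
have [aHXi aHXi1] := (aHX _ (ltnW im), aHX _ im).
have [aXX _] := rim i im.
have nXX' : ~~ same_branch (X i.+1) (X i) by rewrite same_branch_sym nXX.
exists i => //; split.
- exact: spoke_antipodal XiQ Xi1Q nHi nHi1 (nXX i im) aHXi aHXi1 aXX.
- exact: spoke_antipodal Xi1Q XiQ nHi1 nHi nXX' aHXi1 aHXi (attached_sym aXX).
Qed.

Lemma no_odd_wheel k (col : option 'I_(k.*2.+1) -> option 'I_(k.*2.+1) -> option bool) :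
  (forall i j, cyc_adj i j -> col (Some i) (Some j) = Some true) ->
  (forall j, exists b, col None (Some j) = Some b) ->
  (forall i j, cyc_adj i j ->
     (col None (Some i) == Some false) || (col None (Some j) == Some false)) ->
  ~ contains_colored e col Q.
Proof.
move=> rim spoke dom [phi [phiQ _ ant dmn]].
pose x i : 'I_(k.*2.+1) := Ordinal (ltn_pmod i (ltn0Sn k.*2)).
have adj_x i : cyc_adj (x i) (x i.+1).
  by rewrite /cyc_adj /= -[(i %% _).+1]addn1 modnDml addn1 eqxx.
have att j : attached e Q (phi None) (phi (Some j)).
  by have [[] E] := spoke j; [apply: (ant _ _ E).1 | apply: (dmn _ _ E).1].
have x_cyc : x k.*2.+1 = x 0 by apply: val_inj; rewrite /= modnn mod0n.
have [||||||i _ [ant_i ant_i1]] :=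
  @hub_odd_rim (phi None) (fun i => phi (Some (x i))) k.*2.+1.
- by rewrite /= odd_double.
- exact: phiQ.
- by move=> i _; apply: phiQ.
- by move=> i _; apply: att.
- by move=> i _; apply: ant; apply: rim.
- by rewrite x_cyc.
by case/orP: (dom _ _ (adj_x i)) => /eqP /dmn [_]; [apply | apply].
Qed.

Lemma no_fan n : 2 <= n -> ~ contains_colored e (@Fcol n) Q.
Proof.
move=> n_ge2 [phi [phiQ _ ant dmn]].
have n2_gt0 : 0 < n.*2 by lia.
pose x i : 'I_(n.*2) := Ordinal (ltn_pmod i n2_gt0).
have xE i : i < n.*2 -> val (x i) = i by apply: modn_small.
have att j : attached e Q (phi None) (phi (Some j)).
  have [[] E] : exists b, Fcol None (Some j) = Some b by eexists.
  - exact: (ant _ _ E).1.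
  - exact: (dmn _ _ E).1.
have end_branch j : (j == 0) || (j == n.*2.-1) -> j < n.*2 ->
    same_branch (phi None) (phi (Some (x j))) = false.
  move=> jend jn; apply/negbTE/antipodal_not_same_branch; rewrite ?phiQ //.
  by apply: (ant _ _ _).2; rewrite /Fcol xE // jend.
have mid_dom j : 0 < j < n.*2.-1 -> ~ antipodal e Q (phi None) (phi (Some (x j))).
  move=> /andP [j0 jm]; apply: (dmn _ _ _).2; rewrite /Fcol xE; last by lia.
  by rewrite gtn_eqF // ltn_eqF.
have [||||||i im [ant_i ant_i1]] :=
  @hub_odd_rim (phi None) (fun i => phi (Some (x i))) n.*2.-1.
- by case: (n) n_ge2 => // n' _; rewrite doubleS /= odd_double.
- exact: phiQ.
- by move=> i _; apply: phiQ.
- by move=> i _; apply: att.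
- by move=> i im; apply: ant; rewrite /Fcol !xE ?eqxx //; lia.
- by rewrite !end_branch ?eqxx ?orbT //; lia.
case: (posnP i) => [i0 | i_gt0].
- by subst i; apply: mid_dom ant_i1; lia.
- by apply: mid_dom ant_i; lia.
Qed.

Lemma separator_no_obstruction :
  ~ full_antipodal_triangle e Q /\
  (forall k, 1 <= k -> ~ contains_colored e (@W0col k) Q) /\
  (forall k, 1 <= k -> ~ contains_colored e (@W1col k) Q) /\
  (forall n, 2 <= n -> ~ contains_colored e (@Fcol n) Q).
Proof.
split; first exact: no_full_antipodal_triangle.
split; [move=> k _ | split; [move=> k k_gt0 | exact: no_fan]]; apply: no_odd_wheel.
- by move=> i j ij; rewrite /W0col ij.
- by move=> j; exists false.
- by move=> i j _; rewrite /W0col eqxx.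
- by move=> i j ij; rewrite /W1col ij.
- by move=> j; exists (val j == 0).
- move=> i j; rewrite /W1col /cyc_adj.
  case: (eqVneq (val i) 0) => i0; case: (eqVneq (val j) 0) => j0 //=.
  by rewrite i0 j0 modn_small //; lia.
Qed.

End Separator.

End PathModel.

End Tree.

Unset Implicit Arguments.

Theorem lemma4p5 (V : finType) (e : rel V)
    (e_sym : symmetric e) (e_irr : irreflexive e) :
  connected_graph e -> chordal e ->
  (exists Q : {set V}, clique_separator e Q) ->
  path_graph e ->
  forall Q : {set V}, clique_separator e Q ->
    ~ full_antipodal_triangle e Q /\
    (forall k : nat, 1 <= k -> ~ contains_colored e (@W0col k) Q) /\
    (forall k : nat, 1 <= k -> ~ contains_colored e (@W1col k) Q) /\
    (forall n : nat, 2 <= n -> ~ contains_colored e (@Fcol n) Q).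
Proof.
move=> _ _ _ [U [f [P [[f_sym [f_irr [f_connected f_acyclic]]] _ P_path P_adj]]]].
move=> Q [Q_max comps_gt1].
have [C] : exists C, C \in comps e Q by apply/card_gt0P; apply: ltnW.
rewrite inE => /existsP [x _].
have [t t_hub] := clique_hub f_sym f_irr f_acyclic f_connected e_irr P_path P_adj
  Q_max (maxclique_neq0 x Q_max).
exact: (separator_no_obstruction f_sym f_irr f_acyclic f_connected e_sym e_irr P_path P_adj
  Q_max t_hub).
Qed.
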